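(* Let $\mathcal{X}$ be a finite set, $\pi$ a probability mass function on $\mathcal{X}$ with full support, and $P$ an ergodic $\pi$-reversible transition matrix. Let a group $\mathcal{G}$ act on $\mathcal{X}$ and let $G$ and $M$ be the Gibbs and Metropolis–Hastings orbit kernels for this same action. Let $\theta:=\|M-G\|_{\ell^2_0(\pi)\to\ell^2_0(\pi)}$. Then $0\le\rho(MPM)-\rho(GPG)\le\rho(P)(2\theta+\theta^2)$.
   Context: $\langle f,g\rangle_\pi=\sum_x f(x)g(x)\pi(x)$, $\ell^2_0(\pi)=\{f:\sum_xf(x)\pi(x)=0\}$, with operator norm taken with respect to $\|\cdot\|_\pi$. With $\mathcal{O}(x)$ the orbit of $x$: $G(x,y)=\pi(y)/\pi(\mathcal{O}(x))$ for $y\in\mathcal{O}(x)$, else $0$; $M(x,y)=\frac{1}{|\mathcal{O}(x)|-1}\min\{1,\pi(y)/\pi(x)\}$ for $y\in\mathcal{O}(x)\setminus\{x\}$, $0$ off the orbit, $M(x,x)=1-\sum_{y\ne x}M(x,y)$. For a $\pi$-self-adjoint kernel $K$, $\rho(K)=\sup_{0\ne f\in\ell^2_0(\pi)}|\langle f,Kf\rangle_\pi|/\langle f,f\rangle_\pi$ (the second-largest eigenvalue in modulus). Equivalently, $\theta$ is the largest absolute value of an eigenvalue of $M$ restricted to the orthogonal complement in $\ell^2(\pi)$ of the functions constant on orbits. *)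

From HB Require Import structures.
From mathcomp Require Import all_boot all_order all_algebra all_fingroup.
From mathcomp Require Import classical_sets reals.
Set Implicit Arguments. Unset Strict Implicit. Unset Printing Implicit Defensive.
Import Order.TTheory GRing.Theory Num.Theory.
Local Open Scope ring_scope.
Local Open Scope classical_set_scope.

Section Defs.
Variables (R : realType) (X : finType).

Definition kmul (K L : X -> X -> R) : X -> X -> R :=
  fun x y => \sum_(z : X) K x z * L z y.

Definition kid : X -> X -> R := fun x y => if x == y then 1 else 0.

Fixpoint kpow (K : X -> X -> R) (n : nat) : X -> X -> R :=
  match n with O => kid | S m => kmul (kpow K m) K end.

Definition kapp (K : X -> X -> R) (f : X -> R) : X -> R :=
  fun x => \sum_(y : X) K x y * f y.

Definition ksub (K L : X -> X -> R) : X -> X -> R := fun x y => K x y - L x y.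

Variable pi : X -> R.

Definition is_pmf : Prop := (forall x, 0 < pi x) /\ \sum_(x : X) pi x = 1.

Definition ip (f g : X -> R) : R := \sum_(x : X) f x * g x * pi x.
Definition pnorm (f : X -> R) : R := Num.sqrt (ip f f).

Definition l20 (f : X -> R) : Prop := \sum_(x : X) f x * pi x = 0.

Definition is_transition (P : X -> X -> R) : Prop :=
  (forall x y, 0 <= P x y) /\ (forall x, \sum_(y : X) P x y = 1).

Definition reversible (P : X -> X -> R) : Prop :=
  forall x y, pi x * P x y = pi y * P y x.

Definition irreducible (P : X -> X -> R) : Prop :=
  forall x y, exists n, 0 < kpow P n x y.

(* the period of every state (gcd of its return times) is 1 *)
Definition aperiodic (P : X -> X -> R) : Prop :=
  forall x (d : nat), (forall n, (0 < n)%N -> 0 < kpow P n x x -> (d %| n)%N) ->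
    d = 1%N.

Definition ergodic (P : X -> X -> R) : Prop := irreducible P /\ aperiodic P.

Definition rho (K : X -> X -> R) : R :=
  sup [set r | exists f : X -> R, [/\ l20 f, f <> (fun _ => 0) &
                 r = `|ip f (kapp K f)| / ip f f] ].

Definition opnorm0 (K : X -> X -> R) : R :=
  sup [set r | exists f : X -> R, [/\ l20 f, f <> (fun _ => 0) &
                 r = pnorm (kapp K f) / pnorm f] ].

Section Orbit.
Variables (gT : finGroupType) (H : {group gT}) (to : action H X).

Definition orb (x : X) : {set X} := orbit to H x.

Definition piset (A : {set X}) : R := \sum_(x in A) pi x.

Definition gibbsK : X -> X -> R :=
  fun x y => if y \in orb x then pi y / piset (orb x) else 0.

Definition mh_off (x y : X) : R :=
  if (y \in orb x) && (y != x) then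
    ((#|orb x|.-1)%:R)^-1 * Num.min 1 (pi y / pi x)
  else 0.

Definition mhK : X -> X -> R :=
  fun x y => if x == y then 1 - \sum_(z : X | z != x) mh_off x z else mh_off x y.
End Orbit.
End Defs.

(* The Gibbs kernel G is the pi-orthogonal projection onto the functions constant on
   orbits, and the Metropolis-Hastings kernel M fixes those functions, so M G = G.
   Lower bound: <f, GPG f> = <Gf, MPM (Gf)> <= rho(MPM) |Gf|^2 <= rho(MPM) |f|^2.
   Upper bound: write Mf = Gf + (M - G) f and expand <Mf, P Mf>.  The cross term is
   controlled by |<u, P v>| <= rho(P) |u| |v|, which polarization yields for the
   self-adjoint P, and |(M - G) f| <= theta |f|. *)

From mathcomp Require Import all_boot all_order all_algebra all_fingroup.
From mathcomp Require Import classical_sets reals boolp.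
From mathcomp Require Import ring lra.
Import Order.TTheory GRing.Theory Num.Theory.
Local Open Scope ring_scope.
Set Implicit Arguments. Unset Strict Implicit. Unset Printing Implicit Defensive.

Section InnerProduct.
Variables (R : realType) (X : finType) (pi : X -> R).
Implicit Types (K : X -> X -> R) (f g u v : X -> R) (a : R).

Lemma ipC f g : ip pi f g = ip pi g f.
Proof. by apply: eq_bigr => x _; rewrite (mulrC (f x)). Qed.

Lemma ipDl f g u : ip pi (fun x => f x + g x) u = ip pi f u + ip pi g u.
Proof. by rewrite /ip -big_split; apply: eq_bigr => x _ /=; ring. Qed.

Lemma ipBl f g u : ip pi (fun x => f x - g x) u = ip pi f u - ip pi g u.
Proof. by rewrite /ip -sumrB; apply: eq_bigr => x _ /=; ring. Qed.

Lemma ipZl a f g : ip pi (fun x => a * f x) g = a * ip pi f g.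
Proof. by rewrite /ip mulr_sumr; apply: eq_bigr => x _ /=; ring. Qed.

Lemma ip0l g : ip pi (fun _ => 0) g = 0.
Proof. by rewrite /ip big1 // => x _; rewrite !mul0r. Qed.

Lemma ipDr f g u : ip pi u (fun x => f x + g x) = ip pi u f + ip pi u g.
Proof. by rewrite ipC ipDl !(ipC u). Qed.

Lemma ipBr f g u : ip pi u (fun x => f x - g x) = ip pi u f - ip pi u g.
Proof. by rewrite ipC ipBl !(ipC u). Qed.

Lemma ipZr a f g : ip pi g (fun x => a * f x) = a * ip pi g f.
Proof. by rewrite ipC ipZl ipC. Qed.

Lemma ip0r g : ip pi g (fun _ => 0) = 0.
Proof. by rewrite ipC ip0l. Qed.

Lemma ipDD u v : ip pi (fun x => u x + v x) (fun x => u x + v x) =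
  ip pi u u + 2 * ip pi u v + ip pi v v.
Proof. by rewrite ipDl !ipDr (ipC v u); ring. Qed.

Lemma ipBB u v : ip pi (fun x => u x - v x) (fun x => u x - v x) =
  ip pi u u - 2 * ip pi u v + ip pi v v.
Proof. by rewrite ipBl !ipBr (ipC v u); ring. Qed.

Lemma kappD K f g : kapp K (fun x => f x + g x) = (fun x => kapp K f x + kapp K g x).
Proof. by apply: funext => x; rewrite /kapp -big_split; apply: eq_bigr => y _ /=; ring. Qed.

Lemma kappB K f g : kapp K (fun x => f x - g x) = (fun x => kapp K f x - kapp K g x).
Proof. by apply: funext => x; rewrite /kapp -sumrB; apply: eq_bigr => y _ /=; ring. Qed.

Lemma kappZ K a f : kapp K (fun x => a * f x) = (fun x => a * kapp K f x).
Proof. by apply: funext => x; rewrite /kapp mulr_sumr; apply: eq_bigr => y _ /=; ring. Qed.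

Lemma kapp0 K : kapp K (fun _ => 0) = (fun _ => 0).
Proof. by apply: funext => x; rewrite /kapp big1 // => y _; rewrite mulr0. Qed.

Lemma kapp_ksub K L f : kapp (ksub K L) f = (fun x => kapp K f x - kapp L f x).
Proof.
by apply: funext => x; rewrite /kapp -sumrB; apply: eq_bigr => y _; rewrite mulrBl.
Qed.

Lemma kapp_kmul K L f : kapp (kmul K L) f = kapp K (kapp L f).
Proof.
apply: funext => x; rewrite /kapp /kmul.
under eq_bigr do rewrite mulr_suml.
rewrite exchange_big /=; apply: eq_bigr => z _.
by rewrite mulr_sumr; apply: eq_bigr => y _; rewrite mulrA.
Qed.

Lemma ip_kappC K f g : reversible pi K -> ip pi f (kapp K g) = ip pi (kapp K f) g.
Proof.
move=> rK; rewrite /ip /kapp.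
under eq_bigr do rewrite mulr_sumr mulr_suml.
under [RHS]eq_bigr do rewrite !mulr_suml.
rewrite [RHS]exchange_big /=; apply: eq_bigr => x _; apply: eq_bigr => y _.
transitivity (f x * g y * (pi x * K x y)); first by ring.
by rewrite rK; ring.
Qed.

Lemma ip_kmul_sandwich A K f : reversible pi A ->
  ip pi f (kapp (kmul A (kmul K A)) f) = ip pi (kapp A f) (kapp K (kapp A f)).
Proof. by move=> rA; rewrite !kapp_kmul ip_kappC. Qed.

Lemma ip_kappDD K u v : reversible pi K ->
  ip pi (fun x => u x + v x) (kapp K (fun x => u x + v x)) =
  ip pi u (kapp K u) + 2 * ip pi u (kapp K v) + ip pi v (kapp K v).
Proof.
move=> rK; rewrite kappD ipDl !ipDr.
by rewrite [ip pi v (kapp K u)]ip_kappC // (ipC (kapp K v)); ring.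
Qed.

Lemma ip_kappBB K u v : reversible pi K ->
  ip pi (fun x => u x - v x) (kapp K (fun x => u x - v x)) =
  ip pi u (kapp K u) - 2 * ip pi u (kapp K v) + ip pi v (kapp K v).
Proof.
move=> rK; rewrite kappB ipBl !ipBr.
by rewrite [ip pi v (kapp K u)]ip_kappC // (ipC (kapp K v)); ring.
Qed.

End InnerProduct.

Section Norm.
Variables (R : realType) (X : finType) (pi : X -> R).
Hypothesis pi_gt0 : forall x, 0 < pi x.
Implicit Types (K : X -> X -> R) (f g : X -> R).

Lemma sqr_weight_ge0 f x : 0 <= f x * f x * pi x.
Proof. by rewrite mulr_ge0 ?(ltW (pi_gt0 x)) // -expr2 sqr_ge0. Qed.

Lemma ip_ge0 f : 0 <= ip pi f f.
Proof. by apply: sumr_ge0 => x _; exact: sqr_weight_ge0. Qed.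

Lemma ip_gt0 f : f <> (fun _ => 0) -> 0 < ip pi f f.
Proof.
move=> fn0; rewrite lt_def ip_ge0 andbT; apply: contra_notN fn0 => /eqP ff0.
apply: funext => x.
have /eqP := @psumr_eq0P _ _ _ _ (fun y _ => sqr_weight_ge0 f y) ff0 x isT.
by rewrite !mulf_eq0 orbb (gt_eqF (pi_gt0 x)) orbF => /eqP.
Qed.

Lemma pnorm_ge0 f : 0 <= pnorm pi f.
Proof. exact: sqrtr_ge0. Qed.

Lemma pnorm_gt0 f : f <> (fun _ => 0) -> 0 < pnorm pi f.
Proof. by move=> fn0; rewrite sqrtr_gt0 ip_gt0. Qed.

Lemma pnorm_sqr f : pnorm pi f ^+ 2 = ip pi f f.
Proof. by rewrite sqr_sqrtr // ip_ge0. Qed.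

Lemma pnorm0 : pnorm pi (fun _ => 0) = 0.
Proof. by rewrite /pnorm ip0l sqrtr0. Qed.

Lemma abs_le_pnorm f y : `|f y| <= (Num.sqrt (pi y))^-1 * pnorm pi f.
Proof.
rewrite ler_pdivlMl ?sqrtr_gt0 // -[`|f y|]sqrtr_sqr -sqrtrM ?(ltW (pi_gt0 y)) //.
rewrite /pnorm ler_sqrt ?ip_ge0 // /ip (bigD1 y) //= mulrC expr2 lerDl.
by apply: sumr_ge0 => x _; exact: sqr_weight_ge0.
Qed.

(* Crude; it only serves to make the suprema defining [rho] and [opnorm0] finite. *)
Lemma abs_ip_kapp_bounded K : exists2 B, 0 <= B &
  forall f g, `|ip pi g (kapp K f)| <= B * (pnorm pi g * pnorm pi f).
Proof.
pose s x := Num.sqrt (pi x).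
exists (\sum_x \sum_y `|K x y| * pi x * ((s x)^-1 * (s y)^-1)).
  by do 2 apply: sumr_ge0 => ? _; rewrite !mulr_ge0 ?invr_ge0 ?sqrtr_ge0 ?(ltW (pi_gt0 _)).
move=> f g; rewrite mulr_suml /ip; apply: le_trans (ler_norm_sum _ _ _) _.
apply: ler_sum => x _; rewrite mulr_suml /kapp mulr_sumr mulr_suml.
apply: le_trans (ler_norm_sum _ _ _) _; apply: ler_sum => y _.
rewrite !normrM (ger0_norm (ltW (pi_gt0 x))).
rewrite [X in _ <= X](_ : _ = `|K x y| * pi x *
   (((s x)^-1 * pnorm pi g) * ((s y)^-1 * pnorm pi f))); last by ring.
rewrite [X in X <= _](_ : _ = `|K x y| * pi x * (`|g x| * `|f y|)); last by ring.
by rewrite ler_wpM2l ?mulr_ge0 ?(ltW (pi_gt0 x)) // ler_pM ?abs_le_pnorm.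
Qed.

End Norm.

Section L20.
Variables (R : realType) (X : finType) (pi : X -> R).
Implicit Types (K : X -> X -> R) (u v : X -> R) (a : R).

Lemma l20D u v : l20 pi u -> l20 pi v -> l20 pi (fun x => u x + v x).
Proof.
by rewrite /l20 => lu lv; under eq_bigr do rewrite mulrDl; rewrite big_split /= lu lv addr0.
Qed.

Lemma l20B u v : l20 pi u -> l20 pi v -> l20 pi (fun x => u x - v x).
Proof.
by rewrite /l20 => lu lv; under eq_bigr do rewrite mulrBl; rewrite sumrB lu lv subr0.
Qed.

Lemma l20Z a u : l20 pi u -> l20 pi (fun x => a * u x).
Proof.
by rewrite /l20 => lu; under eq_bigr do rewrite -mulrA; rewrite -mulr_sumr lu mulr0.
Qed.

Lemma l20_kapp K u : reversible pi K -> (forall x, \sum_y K x y = 1) ->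
  l20 pi u -> l20 pi (kapp K u).
Proof.
move=> rK sK; have l20E v : l20 pi v <-> ip pi (fun _ => 1) v = 0.
  by rewrite /l20 /ip; under [in X in _ <-> X]eq_bigr do rewrite mul1r.
have K1 : kapp K (fun _ => 1) = (fun _ => 1).
  by apply: funext => x; rewrite /kapp; under eq_bigr do rewrite mulr1; exact: sK.
by rewrite !l20E ip_kappC // K1.
Qed.

End L20.

Section L20Sup.
Variables (R : realType) (X : finType) (pi : X -> R).
Implicit Types (F : (X -> R) -> R) (B : R).
Local Open Scope classical_set_scope.

(* [rho pi K] and [opnorm0 pi K] are [l20_sup] of a ratio, up to conversion. *)
Definition l20_sup F : R :=
  sup [set r | exists f, [/\ l20 pi f, f <> (fun _ => 0) & r = F f]].

Lemma l20_sup_empty F : ~ (exists f, l20 pi f /\ f <> (fun _ => 0)) -> l20_sup F = 0.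
Proof.
move=> none; rewrite /l20_sup -[RHS](sup0 R); congr sup.
by apply/seteqP; split => // r [f [lf nf _]]; apply: none; exists f.
Qed.

Definition l20_bounded F B :=
  forall f, l20 pi f -> f <> (fun _ => 0) -> 0 <= F f <= B.

Lemma l20_sup_ub F B f : l20_bounded F B ->
  l20 pi f -> f <> (fun _ => 0) -> F f <= l20_sup F.
Proof.
move=> hB lf nf; apply: ub_le_sup; last by exists f.
by exists B => _ [g [lg ng ->]]; case/andP: (hB g lg ng).
Qed.

Lemma l20_sup_ge0 F B : l20_bounded F B -> 0 <= l20_sup F.
Proof.
move=> hB; have [[f [lf nf]]|none] := pselect (exists f, l20 pi f /\ f <> (fun _ => 0)).
  by have /andP[F0 _] := hB f lf nf; apply: le_trans F0 (l20_sup_ub hB lf nf).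
by rewrite l20_sup_empty.
Qed.

Lemma l20_sup_le F B : 0 <= B -> (forall f, l20 pi f -> f <> (fun _ => 0) -> F f <= B) ->
  l20_sup F <= B.
Proof.
move=> B0 hB; have [[f [lf nf]]|none] := pselect (exists f, l20 pi f /\ f <> (fun _ => 0)).
  by apply: ge_sup; [exists (F f), f | move=> _ [g [lg ng ->]]; exact: hB].
by rewrite l20_sup_empty.
Qed.

End L20Sup.

Section RhoOpnorm.
Variables (R : realType) (X : finType) (pi : X -> R).
Hypothesis pi_gt0 : forall x, 0 < pi x.
Implicit Types (K : X -> X -> R) (f u v : X -> R).

Local Notation rho_ratio K := (fun f => `|ip pi f (kapp K f)| / ip pi f f).
Local Notation opnorm0_ratio K := (fun f => pnorm pi (kapp K f) / pnorm pi f).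

Lemma rho_ratio_bounded K : exists B, l20_bounded pi (rho_ratio K) B.
Proof.
have [B _ hB] := abs_ip_kapp_bounded pi_gt0 K; exists B => f _ nf.
rewrite divr_ge0 ?(ip_ge0 pi_gt0) //= ler_pdivrMr ?(ip_gt0 pi_gt0) //.
by rewrite -(pnorm_sqr pi_gt0) expr2 hB.
Qed.

Lemma rho_ge0 K : 0 <= rho pi K.
Proof. by have [B /l20_sup_ge0] := rho_ratio_bounded K. Qed.

Lemma abs_ip_kapp_le_rho K f : l20 pi f -> `|ip pi f (kapp K f)| <= rho pi K * ip pi f f.
Proof.
move=> lf; have [->|nf] := pselect (f = fun _ => 0); first by rewrite !ip0l normr0 mulr0.
rewrite -ler_pdivrMr ?(ip_gt0 pi_gt0) //.
by have [B /l20_sup_ub ub] := rho_ratio_bounded K; exact: ub lf nf.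
Qed.

Lemma rho_le K b : 0 <= b ->
  (forall f, l20 pi f -> `|ip pi f (kapp K f)| <= b * ip pi f f) -> rho pi K <= b.
Proof.
move=> b0 hb; apply: (l20_sup_le (F := rho_ratio K)) => // f lf nf.
by rewrite ler_pdivrMr ?(ip_gt0 pi_gt0) ?hb.
Qed.

Lemma opnorm0_ratio_bounded K : exists B, l20_bounded pi (opnorm0_ratio K) B.
Proof.
have [B B0 hB] := abs_ip_kapp_bounded pi_gt0 K; exists B => f _ nf.
rewrite divr_ge0 ?pnorm_ge0 //= ler_pdivrMr ?(pnorm_gt0 pi_gt0) //.
have [->|nKf] := pselect (kapp K f = fun _ => 0).
  by rewrite pnorm0 mulr_ge0 ?pnorm_ge0.
rewrite -(ler_pM2l (pnorm_gt0 pi_gt0 nKf)) mulrCA -expr2 (pnorm_sqr pi_gt0).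
by rewrite -(ger0_norm (ip_ge0 pi_gt0 _)) hB.
Qed.

Lemma opnorm0_ge0 K : 0 <= opnorm0 pi K.
Proof. by have [B /l20_sup_ge0] := opnorm0_ratio_bounded K. Qed.

Lemma pnorm_kapp_le_opnorm0 K f : l20 pi f ->
  pnorm pi (kapp K f) <= opnorm0 pi K * pnorm pi f.
Proof.
move=> lf; have [->|nf] := pselect (f = fun _ => 0); first by rewrite kapp0 pnorm0 mulr0.
rewrite -ler_pdivrMr ?(pnorm_gt0 pi_gt0) //.
by have [B /l20_sup_ub ub] := opnorm0_ratio_bounded K; exact: ub lf nf.
Qed.

Lemma abs_ip_kapp_le_rho_polar K u v : reversible pi K -> l20 pi u -> l20 pi v ->
  2 * `|ip pi u (kapp K v)| <= rho pi K * (ip pi u u + ip pi v v).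
Proof.
move=> rK lu lv.
have := abs_ip_kapp_le_rho K (l20D lu lv); have := abs_ip_kapp_le_rho K (l20B lu lv).
rewrite ip_kappBB // ip_kappDD // ipBB ipDD !ler_norml => /andP[? ?] /andP[? ?].
by rewrite -[2]ger0_norm // -normrM ler_norml; apply/andP; split; lra.
Qed.

Lemma abs_ip_kapp_le_rho_pnorm K u v : reversible pi K -> l20 pi u -> l20 pi v ->
  `|ip pi u (kapp K v)| <= rho pi K * (pnorm pi u * pnorm pi v).
Proof.
move=> rK lu lv.
have [->|nu] := pselect (u = fun _ => 0); first by rewrite ip0l normr0 pnorm0 mul0r mulr0.
have [->|nv] := pselect (v = fun _ => 0); first by rewrite kapp0 ip0r normr0 pnorm0 !mulr0.
have a0 := pnorm_gt0 pi_gt0 nu; have b0 := pnorm_gt0 pi_gt0 nv.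
(* Polarize [b u] and [a v], which have the same norm [a b]. *)
have := abs_ip_kapp_le_rho_polar rK (l20Z (pnorm pi v) lu) (l20Z (pnorm pi u) lv).
rewrite kappZ !(ipZl, ipZr) -!(pnorm_sqr pi_gt0) !normrM (gtr0_norm a0) (gtr0_norm b0).
set a := pnorm pi u; set b := pnorm pi v => h.
rewrite -(ler_pM2l (_ : 0 < 2 * (a * b))) ?mulr_gt0 //.
by congr (_ <= _): h; ring.
Qed.

End RhoOpnorm.

Lemma mulr_min1_div (R : realFieldType) (a b : R) : 0 < a ->
  a * Num.min 1 (b / a) = Num.min a b.
Proof. by move=> a0; rewrite minr_pMr ?ltW // mulr1 mulrC divfK ?gt_eqF. Qed.

Section OrbitKernels.
Variables (R : realType) (X : finType) (pi : X -> R).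
Hypothesis pi_gt0 : forall x, 0 < pi x.
Variables (gT : finGroupType) (H : {group gT}) (to : action H X).
Implicit Types (K : X -> X -> R) (f g : X -> R).
Local Notation G := (gibbsK pi to).
Local Notation M := (mhK pi to).

Lemma orb_sym x y : (y \in orb to x) = (x \in orb to y).
Proof. exact: (orbit_in_sym to (subxx H)). Qed.

Lemma orb_eq x y : y \in orb to x -> orb to y = orb to x.
Proof. by move=> h; apply/orbit_in_eqP. Qed.

Lemma piset_orb_gt0 x : 0 < piset pi (orb to x).
Proof.
rewrite /piset (bigD1 x) ?orbit_refl //= ltr_pwDl //.
by apply: sumr_ge0 => y _; exact: ltW.
Qed.

Lemma gibbsK_reversible : reversible pi G.
Proof.
move=> x y; rewrite /gibbsK orb_sym.
by case: ifP => [/orb_eq->|_]; [exact: mulrCA | rewrite !mulr0].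
Qed.

Lemma gibbsK_sum1 x : \sum_y G x y = 1.
Proof. by rewrite /gibbsK -big_mkcond /= -mulr_suml divff // gt_eqF ?piset_orb_gt0. Qed.

Lemma gibbsK_supp x y : G x y != 0 -> y \in orb to x.
Proof. by rewrite /gibbsK; case: ifP; rewrite ?eqxx. Qed.

Lemma mhK_reversible : reversible pi M.
Proof.
move=> x y; have [->//|nxy] := eqVneq x y.
rewrite /mhK (negbTE nxy) eq_sym (negbTE nxy) /mh_off orb_sym eq_sym nxy !andbT.
case: ifP => [/orb_eq->|_]; last by rewrite !mulr0.
by rewrite mulrCA [RHS]mulrCA !mulr_min1_div // minC.
Qed.

Lemma mhK_sum1 x : \sum_y M x y = 1.
Proof.
rewrite (bigD1 x) //= (eq_bigr (mh_off pi to x)) => [|y nyx].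
  by rewrite /mhK eqxx subrK.
by rewrite /mhK eq_sym (negbTE nyx).
Qed.

Lemma mhK_supp x y : M x y != 0 -> y \in orb to x.
Proof.
have [<-|nxy] := eqVneq x y; first by rewrite orbit_refl.
by rewrite /mhK (negbTE nxy) /mh_off; case: ifP => [/andP[]|_]; rewrite ?eqxx.
Qed.

Lemma kapp_orb_const K f : (forall x, \sum_y K x y = 1) ->
  (forall x y, K x y != 0 -> y \in orb to x) ->
  (forall x y, y \in orb to x -> f y = f x) -> kapp K f = f.
Proof.
move=> sK suppK cf; apply: funext => x; rewrite /kapp.
rewrite -[RHS]mul1r -(sK x) mulr_suml; apply: eq_bigr => y _.
by have [->|/suppK/cf->] := eqVneq (K x y) 0; rewrite ?mul0r.
Qed.

Lemma kapp_gibbsK_orb_const f x y : y \in orb to x -> kapp G f y = kapp G f x.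
Proof. by move=> /orb_eq hy; rewrite /kapp /gibbsK hy. Qed.

Lemma kapp_mhK_gibbsK f : kapp M (kapp G f) = kapp G f.
Proof. exact/kapp_orb_const/kapp_gibbsK_orb_const/mhK_supp/mhK_sum1. Qed.

Lemma kapp_gibbsK_idem f : kapp G (kapp G f) = kapp G f.
Proof. exact/kapp_orb_const/kapp_gibbsK_orb_const/gibbsK_supp/gibbsK_sum1. Qed.

(* [G] is the orthogonal projection onto orbit-constant functions, hence a contraction. *)
Lemma ip_kapp_gibbsK_le f : ip pi (kapp G f) (kapp G f) <= ip pi f f.
Proof.
have := ip_ge0 pi_gt0 (fun x => f x - kapp G f x).
rewrite ipBB -[in ip pi f (kapp G f)]kapp_gibbsK_idem ip_kappC; first lra.
exact: gibbsK_reversible.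
Qed.

End OrbitKernels.

Section Comparison.
Variables (R : realType) (X : finType) (pi : X -> R).
Hypothesis pi_gt0 : forall x, 0 < pi x.
Variables (gT : finGroupType) (H : {group gT}) (to : action H X) (P : X -> X -> R).
Hypothesis rP : reversible pi P.
Local Notation G := (gibbsK pi to).
Local Notation M := (mhK pi to).
Local Notation theta := (opnorm0 pi (ksub M G)).

Lemma rho_gibbs_le_rho_mh : rho pi (kmul G (kmul P G)) <= rho pi (kmul M (kmul P M)).
Proof.
apply: (rho_le pi_gt0) => [|f lf]; first exact: rho_ge0.
have lGf := l20_kapp (gibbsK_reversible pi to) (gibbsK_sum1 pi_gt0 to) lf.
rewrite ip_kmul_sandwich; last exact: gibbsK_reversible.
rewrite -(kapp_mhK_gibbsK pi to f) -ip_kmul_sandwich; last exact: mhK_reversible.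
apply: le_trans (abs_ip_kapp_le_rho pi_gt0 _ lGf) _.
by rewrite ler_wpM2l ?(rho_ge0 pi_gt0) ?ip_kapp_gibbsK_le.
Qed.

Lemma abs_ip_mh_sandwich_le f : l20 pi f ->
  `|ip pi f (kapp (kmul M (kmul P M)) f)| <=
  (rho pi (kmul G (kmul P G)) + rho pi P * (2 * theta + theta ^+ 2)) * ip pi f f.
Proof.
move=> lf; have rG := gibbsK_reversible pi to; have rM := mhK_reversible pi_gt0 to.
have th0 := opnorm0_ge0 pi_gt0 (ksub M G); have rP0 := rho_ge0 pi_gt0 P.
set g := kapp G f; set h := kapp (ksub M G) f.
have lg : l20 pi g := l20_kapp rG (gibbsK_sum1 pi_gt0 to) lf.
have lh : l20 pi h by rewrite /h kapp_ksub; exact/l20B/lg/(l20_kapp rM (mhK_sum1 pi to)).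
have Mf : kapp M f = (fun x => g x + h x).
  by apply: funext => x; rewrite /h kapp_ksub /g addrC subrK.
have ng : pnorm pi g <= pnorm pi f by rewrite ler_sqrt ?ip_ge0 ?ip_kapp_gibbsK_le.
have nh : pnorm pi h <= theta * pnorm pi f := pnorm_kapp_le_opnorm0 pi_gt0 _ lf.
have A : `|ip pi g (kapp P g)| <= rho pi (kmul G (kmul P G)) * ip pi f f.
  by rewrite -ip_kmul_sandwich // abs_ip_kapp_le_rho.
have B : `|ip pi g (kapp P h)| <= rho pi P * (theta * ip pi f f).
  apply: le_trans (abs_ip_kapp_le_rho_pnorm pi_gt0 rP lg lh) _.
  by rewrite ler_wpM2l // -(pnorm_sqr pi_gt0) expr2 mulrCA ler_pM ?pnorm_ge0.
have C : `|ip pi h (kapp P h)| <= rho pi P * (theta ^+ 2 * ip pi f f).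
  apply: le_trans (abs_ip_kapp_le_rho pi_gt0 _ lh) _.
  by rewrite ler_wpM2l // -!(pnorm_sqr pi_gt0) -exprMn !expr2 ler_pM ?pnorm_ge0.
rewrite ip_kmul_sandwich // Mf ip_kappDD //.
set a := ip pi g _ in A *; set w := ip pi g _ in B *; set c := ip pi h _ in C *.
have := ler_normD (a + 2 * w) c; have := ler_normD a (2 * w).
rewrite normrM (ger0_norm (ler0n _ 2)); lra.
Qed.

End Comparison.

Theorem proposition3p5 (R : realType) (X : finType) (pi : X -> R)
  (P : X -> X -> R) (gT : finGroupType) (H : {group gT}) (to : action H X) :
  is_pmf pi -> is_transition P -> reversible pi P -> ergodic P ->
  let G := gibbsK pi to in
  let M := mhK pi to in
  let theta := opnorm0 pi (ksub M G) in
  0 <= rho pi (kmul M (kmul P M)) - rho pi (kmul G (kmul P G)) /\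
  rho pi (kmul M (kmul P M)) - rho pi (kmul G (kmul P G))
    <= rho pi P * (2 * theta + theta ^+ 2).
Proof.
move=> [pi_gt0 _] _ rP _ G M theta; split.
  by rewrite subr_ge0; exact: rho_gibbs_le_rho_mh.
have th0 : 0 <= theta := opnorm0_ge0 pi_gt0 _.
rewrite lerBlDl; apply: (rho_le pi_gt0) => [|f]; last exact: abs_ip_mh_sandwich_le.
by rewrite addr_ge0 ?(rho_ge0 pi_gt0) // mulr_ge0 ?(rho_ge0 pi_gt0) //
  addr_ge0 ?exprn_ge0 ?mulr_ge0.
Qed.
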